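(* Let $t$ be a positive integer and let $G$ be a finite group (not necessarily abelian, written additively) such that the smallest prime divisor $p$ of $|G|$ satisfies $p>t$. Let $a_1,\dots,a_n$ be distinct non-identity elements of $G$ and let $M_1=[a_1^{\alpha_1},\dots,a_n^{\alpha_n}]$ and $M_2=[a_1^{\beta_1},\dots,a_n^{\beta_n}]$ be multisets (with nonnegative integer multiplicities $\alpha_i,\beta_i$). Assume that the underlying set of $M_2$ (i.e. $\{a_i:\beta_i>0\}$) has size larger than $2t^2$. Then there is a $t$-weakly sequenceable multiset $M_3$ such that $M_1\subseteq M_3\subseteq M_1\cup M_2$ and $|M_3\setminus M_1|\leq t^2$.
   Context: $[a_1^{\lambda_1},\dots,a_n^{\lambda_n}]$ denotes the multiset containing $a_i$ with multiplicity $\lambda_i$. For multisets, $\subseteq$ means multiplicity-wise inequality, $M_1\cup M_2$ is the multiset whose multiplicity of $a_i$ is $\alpha_i+\beta_i$, and $M_3\setminus M_1$ is the multiset difference (multiplicities subtracted); $|\cdot|$ is the size counted with multiplicity. Given a multiset $M$ of size $m$, a $t$-weak ordering (or $t$-weak sequencing) of $M$ is a sequence $(y_1,\dots,y_m)$ in which each element of $M$ appears exactly as many times as its multiplicity, such that the partial sums $s_0=0$, $s_i=y_1+y_2+\dots+y_i$ ($1\le i\le m$, summed left to right) satisfy $s_i\neq s_j$ whenever $0\le i<j\le m$ and $j-i\le t$. $M$ is $t$-weakly sequenceable if it admits a $t$-weak ordering. *)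

From mathcomp Require Import all_boot all_fingroup.
Set Implicit Arguments. Unset Strict Implicit. Unset Printing Implicit Defensive.
Local Open Scope group_scope.

(* The group G is the whole of a finGroupType gT; its (possibly non-abelian)
   operation, written additively in the paper, is the group product here. *)

Definition partial_sum (gT : finGroupType) (s : seq gT) (i : nat) : gT :=
  \prod_(x <- take i s) x.

Definition t_weak_seq (gT : finGroupType) (t : nat) (s : seq gT) : Prop :=
  forall i j : nat, (i < j)%N -> (j <= size s)%N -> (j - i <= t)%N ->
    partial_sum s i != partial_sum s j.

(* a multiset is represented by any seq listing its elements with multiplicity *)
Definition t_weakly_sequenceable (gT : finGroupType) (t : nat) (M : seq gT) : Prop :=
  exists s : seq gT, perm_eq s M /\ t_weak_seq t s.

Definition mset_of (gT : finGroupType) (n : nat) (a : 'I_n -> gT) (g : 'I_n -> nat)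
  : seq gT := flatten [seq nseq (g i) (a i) | i <- enum 'I_n].

From mathcomp Require Import all_boot all_fingroup all_solvable zify.
Set Implicit Arguments. Unset Strict Implicit. Unset Printing Implicit Defensive.
Local Open Scope group_scope.

(* Appending a block x^L to a t-weak sequence s with
   product P can only fail if P x^k (1 <= k < t) equals one of the last t-1
   partial sums of s; as k is invertible modulo |G|, this pins x down to at
   most (t-1)^2 elements.  So append blocks of M1 while possible; the at most
   (t-1)^2 blocks left over are each preceded by a fresh separator z from the
   support of M2, chosen to avoid the at most (t-1) + (t-1)^2 values that would
   make z itself or the following block collide.  The support of M2 has more
   than 2t^2 elements, so such a z always exists. *)

Lemma partial_sum_catl (gT : finGroupType) (s w : seq gT) i :
  (i <= size s)%N -> partial_sum (s ++ w) i = partial_sum s i.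
Proof.
rewrite /partial_sum take_cat; case: ltngtP => // -> _.
by rewrite subnn take0 cats0 take_size.
Qed.

Lemma partial_sum_catr (gT : finGroupType) (s w : seq gT) j :
  (size s <= j)%N ->
  partial_sum (s ++ w) j = partial_sum s (size s) * partial_sum w (j - size s).
Proof. by move=> le_s_j; rewrite /partial_sum take_cat ltnNge le_s_j big_cat take_size. Qed.

Lemma partial_sum_nseq (gT : finGroupType) (x : gT) L k :
  partial_sum (nseq L x) k = x ^+ minn k L.
Proof.
rewrite /partial_sum.
have -> : take k (nseq L x) = nseq (minn k L) x.
  by elim: L k => [|L IHL] [|k] //=; rewrite IHL minnSS.
by elim: (minn k L) => [|m IHm]; rewrite ?big_nil // big_cons IHm expgS.
Qed.

Definition window (m t : nat) : seq nat := iota (m - t.-1) (minn m t.-1).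

Lemma mem_window m t i : (i \in window m t) = (i < m < i + t)%N.
Proof. by rewrite mem_iota; apply/idP/idP => /andP[? ?]; apply/andP; split; lia. Qed.

Lemma size_window m t : (size (window m t) <= t.-1)%N.
Proof. by rewrite size_iota geq_minr. Qed.

Definition collisions (gT : finGroupType) (t : nat) (s : seq gT) : seq gT :=
  [seq (partial_sum s (size s))^-1 * partial_sum s i | i <- window (size s) t].

Lemma size_collisions (gT : finGroupType) t (s : seq gT) :
  (size (collisions t s) <= t.-1)%N.
Proof. by rewrite size_map size_window. Qed.

(* Only k < t matters: a partial sum t or more steps past the end of [s] is
   never compared with one inside [s]. *)
Definition extendable (gT : finGroupType) (t : nat) (s : seq gT) (x : gT) (L : nat) :=
  all (fun k => x ^+ k \notin collisions t s) (iota 1 (minn L t.-1)).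

Lemma extendable1 (gT : finGroupType) t (s : seq gT) z :
  z \notin collisions t s -> extendable t s z 1.
Proof.
move=> zNcoll; apply/allP => k; rewrite mem_iota => /andP[k_gt0 k_lt].
by have -> : k = 1%N by lia.
Qed.

Lemma t_weak_seq_cat_nseq (gT : finGroupType) t (s : seq gT) x L :
  (forall d, (0 < d <= t)%N -> x ^+ d != 1) ->
  t_weak_seq t s -> extendable t s x L -> t_weak_seq t (s ++ nseq L x).
Proof.
move=> x_order s_weak s_ext i j lt_ij; rewrite size_cat size_nseq => le_j le_ji.
have [le_jm|lt_mj] := leqP j (size s).
  by rewrite !partial_sum_catl ?s_weak // (leq_trans (ltnW lt_ij)).
rewrite [partial_sum _ j]partial_sum_catr ?(ltnW lt_mj) // partial_sum_nseq.
have -> : minn (j - size s) L = (j - size s)%N by lia.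
have [le_mi|lt_im] := leqP (size s) i.
  rewrite partial_sum_catr // partial_sum_nseq.
  have -> : minn (i - size s) L = (i - size s)%N by lia.
  have -> : (j - size s = (i - size s) + (j - i))%N by lia.
  rewrite expgD (inj_eq (mulgI _)) -{1}[x ^+ _]mulg1 (inj_eq (mulgI _)).
  by rewrite eq_sym x_order //; lia.
rewrite partial_sum_catl ?(ltnW lt_im) //.
apply: contraTneq s_ext => ps_eq; apply/allPn; exists (j - size s)%N.
  by rewrite mem_iota; lia.
rewrite negbK; apply/mapP; exists i; first by rewrite mem_window; lia.
by rewrite ps_eq mulKg.
Qed.

(* Only partial sums of [s] occur: those of [s ++ [:: z]] up to index
   [size s] coincide with them, so the list does not depend on [z]. *)
Definition bad_separators (gT : finGroupType) (t : nat) (s : seq gT) (x : gT) : seq gT :=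
  [seq (partial_sum s (size s))^-1 * partial_sum s i * (x ^+ k)^-1
    | k <- iota 1 t.-1, i <- window (size s).+1 t].

Lemma size_bad_separators (gT : finGroupType) t (s : seq gT) x :
  (size (bad_separators t s x) <= t.-1 * t.-1)%N.
Proof. by rewrite size_allpairs size_iota leq_mul2l size_window orbT. Qed.

Lemma mem_bad_separators (gT : finGroupType) t (s : seq gT) z x L :
  ~~ extendable t (s ++ [:: z]) x L -> z \in bad_separators t s x.
Proof.
case/allPn => k; rewrite mem_iota negbK => k_range /mapP[i].
rewrite size_cat addn1 mem_window => i_range.
rewrite partial_sum_catr // partial_sum_catl; last by lia.
rewrite subSnn /partial_sum /= big_seq1 => xk_eq.
apply/allpairsP; exists (k, i); split; rewrite ?mem_iota ?mem_window /=; try lia.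
by rewrite xk_eq invMg invgK !mulgA mulgK mulVg mul1g.
Qed.

Definition blocks (gT : finGroupType) (u : seq (gT * nat)) : seq gT :=
  flatten [seq nseq b.2 b.1 | b <- u].

Lemma t_weakly_sequenceable_perm (gT : finGroupType) t (M M' : seq gT) :
  perm_eq M M' -> t_weakly_sequenceable t M -> t_weakly_sequenceable t M'.
Proof. by move=> eqMM' [s [eqsM s_weak]]; exists s; rewrite (perm_trans eqsM eqMM'). Qed.

Lemma t_weak_seq_nil (gT : finGroupType) t : t_weak_seq t ([::] : seq gT).
Proof. by move=> i [|j]. Qed.

Lemma coprime_small_primes m t k :
  (forall p, prime p -> p %| m -> t < p)%N -> (0 < k <= t)%N -> coprime m k.
Proof.
move=> m_primes /andP[k_gt0 le_kt]; apply: contraT => not_coprime.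
have gcd_gt1 : (1 < gcdn m k)%N by rewrite ltn_neqAle eq_sym not_coprime gcdn_gt0 k_gt0 orbT.
have p_prime := pdiv_prime gcd_gt1.
have := m_primes _ p_prime (dvdn_trans (pdiv_dvd _) (dvdn_gcdl m k)).
have := dvdn_leq k_gt0 (dvdn_trans (pdiv_dvd _) (dvdn_gcdr m k)); lia.
Qed.

Section Construction.

Variables (gT : finGroupType) (t : nat).
Hypothesis coprime_small : forall k, (0 < k <= t)%N -> coprime #|[set: gT]| k.

Lemma expg_small_eq1 (x : gT) k : (0 < k <= t)%N -> (x ^+ k == 1) = (x == 1).
Proof.
move=> k_small; apply/eqP/eqP => [xk1|->]; last exact: expg1n.
by rewrite -(expgK (coprime_small k_small) (in_setT x)) xk1 expg1n.
Qed.

Definition blocked (s : seq gT) : seq gT :=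
  [seq y ^+ expg_invn [set: gT] k | k <- iota 1 t.-1, y <- collisions t s].

Lemma size_blocked s : (size (blocked s) <= t.-1 * t.-1)%N.
Proof. by rewrite size_allpairs size_iota leq_mul2l size_collisions orbT. Qed.

Lemma mem_blocked s x L : ~~ extendable t s x L -> x \in blocked s.
Proof.
case/allPn => k; rewrite mem_iota negbK => k_range xk_coll.
apply/allpairsP; exists (k, x ^+ k); split; rewrite ?mem_iota //=; first by lia.
by rewrite (expgK (coprime_small _) (in_setT x)) //; lia.
Qed.

Lemma sequenceable_with_separators (zs : seq gT) (u : seq (gT * nat)) (s : seq gT) :
  uniq zs -> 1 \notin zs -> all (fun b => b.1 != 1) u ->
  (size u + (t.-1 + t.-1 * t.-1) <= size zs)%N -> t_weak_seq t s ->
  exists sp, [/\ uniq sp, {subset sp <= zs}, size sp = size u &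
                 t_weakly_sequenceable t (s ++ blocks u ++ sp)].
Proof.
elim: u zs s => [|[x L] u IHu] zs s zs_uniq zsN1 /=.
  by move=> _ _ s_weak; exists [::]; split => //; exists s; rewrite cats0.
case/andP=> x_neq1 u_neq1 size_zs s_weak.
set forbidden := collisions t s ++ bad_separators t s x.
have [z z_in zNforbidden] : exists2 z, z \in zs & z \notin forbidden.
  apply/allPn; apply: contraTN size_zs => /allP/(uniq_leq_size zs_uniq).
  rewrite /forbidden size_cat -ltnNge => le_zs_forbidden.
  apply: leq_ltn_trans le_zs_forbidden _.
  apply: leq_ltn_trans (leq_add (size_collisions t s) (size_bad_separators t s x)) _.
  by rewrite addSn ltnS leq_addl.
move: zNforbidden; rewrite mem_cat negb_or => /andP[zNcoll zNsep].
have z_order d : (0 < d <= t)%N -> z ^+ d != 1.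
  by move=> d_small; rewrite expg_small_eq1 //; apply: contraNneq zsN1 => <-.
have x_order d : (0 < d <= t)%N -> x ^+ d != 1 by move=> d_small; rewrite expg_small_eq1.
have sz_weak : t_weak_seq t (s ++ [:: z]).
  exact: (t_weak_seq_cat_nseq z_order s_weak (extendable1 zNcoll)).
have szx_weak : t_weak_seq t ((s ++ [:: z]) ++ nseq L x).
  apply: t_weak_seq_cat_nseq x_order sz_weak _.
  by apply: contraNT zNsep; apply: mem_bad_separators.
have [||sp [sp_uniq sp_sub size_sp sp_seq]] :=
  IHu (rem z zs) _ (rem_uniq z zs_uniq) _ u_neq1 _ szx_weak.
- by apply: contra zsN1; apply: mem_rem.
- by move: size_zs; rewrite size_rem // addSn; case: (size zs).
exists (z :: sp); split => /=.
- by rewrite sp_uniq andbT; apply: contraFN (mem_rem_uniqF z zs_uniq); apply: sp_sub.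
- by move=> y; rewrite inE => /predU1P[-> //|/sp_sub/mem_rem].
- by rewrite size_sp.
apply: t_weakly_sequenceable_perm sp_seq.
rewrite /blocks /= -/(blocks u) -!catA perm_cat2l /=.
by rewrite perm_sym !catA (perm_catCA _ [:: z]).
Qed.

Lemma sequenceable_with_few_separators (zs : seq gT) (u : seq (gT * nat)) (s : seq gT) :
  uniq zs -> 1 \notin zs -> all (fun b => b.1 != 1) u -> uniq (map fst u) ->
  (t.-1 * t.-1 + (t.-1 + t.-1 * t.-1) <= size zs)%N -> t_weak_seq t s ->
  exists sp, [/\ uniq sp, {subset sp <= zs}, (size sp <= t.-1 * t.-1)%N &
                 t_weakly_sequenceable t (s ++ blocks u ++ sp)].
Proof.
move=> zs_uniq zsN1 + + size_zs.
have [N] := ubnP (size u); elim: N u s => // N IHN u s size_u u_neq1 u_uniq s_weak.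
have [/hasP[b b_in b_ext]|] := boolP (has (fun b => extendable t s b.1 b.2) u).
  have sb_weak : t_weak_seq t (s ++ nseq b.2 b.1).
    apply: t_weak_seq_cat_nseq s_weak b_ext => d d_small.
    by rewrite expg_small_eq1 // (allP u_neq1).
  have [|||sp [sp_uniq sp_sub size_sp sp_seq]] := IHN (rem b u) _ _ _ _ sb_weak.
  - have u_gt0 : (0 < size u)%N by move: b_in; case: (u).
    by rewrite size_rem // -ltnS prednK.
  - by apply/allP => y /mem_rem; apply: (allP u_neq1).
  - exact: subseq_uniq (map_subseq _ (rem_subseq _ _)) u_uniq.
  exists sp; split => //; apply: t_weakly_sequenceable_perm sp_seq.
  rewrite -catA perm_cat2l catA perm_cat2r perm_sym.
  exact: perm_flatten (perm_map _ (perm_to_rem b_in)).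
rewrite -all_predC => /allP u_blocked.
have size_u_small : (size u <= t.-1 * t.-1)%N.
  rewrite -(size_map fst); apply: leq_trans (size_blocked s).
  apply: (uniq_leq_size u_uniq) => _ /mapP[b b_in ->].
  exact: mem_blocked (u_blocked b b_in).
have [|sp [sp_uniq sp_sub size_sp sp_seq]] :=
  sequenceable_with_separators zs_uniq zsN1 u_neq1 _ s_weak.
  by apply: leq_trans size_zs; rewrite leq_add2r.
by exists sp; split => //; rewrite size_sp.
Qed.

End Construction.

Section Multisets.

Variables (gT : finGroupType) (n : nat) (a : 'I_n -> gT).

Lemma size_mset_of g : size (mset_of a g) = (\sum_(i < n) g i)%N.
Proof.
rewrite /mset_of size_flatten /shape -map_comp sumnE big_map big_enum /=.
by apply: eq_bigr => i _; rewrite size_nseq.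
Qed.

Lemma perm_mset_ofD g h :
  perm_eq (mset_of a (fun i => g i + h i)%N) (mset_of a g ++ mset_of a h).
Proof.
rewrite /mset_of; elim: (enum 'I_n) => //= i e IHe.
by rewrite nseqD -!catA perm_cat2l perm_sym perm_catCA perm_cat2l perm_sym.
Qed.

Lemma perm_mset_of_mem (sp : seq gT) :
  injective a -> uniq sp -> {subset sp <= codom a} ->
  perm_eq (mset_of a (fun i => a i \in sp)) sp.
Proof.
move=> a_inj sp_uniq sp_sub.
have -> : mset_of a (fun i => a i \in sp) = [seq a i | i <- enum 'I_n & a i \in sp].
  by rewrite /mset_of; elim: (enum 'I_n) => //= i e ->; case: (a i \in sp).
apply: uniq_perm => //; first by rewrite map_inj_uniq //; apply/filter_uniq/enum_uniq.
move=> y; apply/mapP/idP => [[i] | y_in]; first by rewrite mem_filter => /andP[? _] ->.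
have /codomP[i y_eq] := sp_sub y y_in.
by exists i => //; rewrite mem_filter -y_eq y_in mem_enum.
Qed.

End Multisets.

Theorem proposition2p2 (gT : finGroupType) (t : nat) (n : nat)
    (a : 'I_n -> gT) (alpha beta : 'I_n -> nat) :
  (0 < t)%N ->
  (forall p : nat, prime p -> p %| #|[set: gT]| -> t < p)%N ->
  injective a ->
  (forall i, a i != 1%g) ->
  (2 * t ^ 2 < #|[set i | (0 < beta i)%N]|)%N ->
  exists gamma : 'I_n -> nat,
    [/\ forall i, (alpha i <= gamma i <= alpha i + beta i)%N,
        (\sum_(i < n) (gamma i - alpha i) <= t ^ 2)%N &
        t_weakly_sequenceable t (mset_of a gamma)].
Proof.
move=> _ small_primes a_inj a_neq1 many_beta.
set zs := [seq a i | i in [set i | (0 < beta i)%N]].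
set u := [seq (a i, alpha i) | i <- enum 'I_n].
have coprime_small k := @coprime_small_primes _ _ k small_primes.
have [|||||sp [sp_uniq sp_sub size_sp sp_seq]] :=
  sequenceable_with_few_separators coprime_small (zs := zs) (u := u)
    _ _ _ _ _ (@t_weak_seq_nil gT t).
- by rewrite map_inj_uniq ?enum_uniq.
- by apply/imageP => -[i _ /esym/eqP]; rewrite (negbTE (a_neq1 i)).
- by apply/allP => _ /mapP[i _ ->]; apply: a_neq1.
- by rewrite -map_comp map_inj_uniq ?enum_uniq.
- by move: many_beta; rewrite size_map -cardE; nia.
have sp_codom : {subset sp <= codom a}.
  by move=> y /sp_sub/imageP[i _ ->]; apply: codom_f.
exists (fun i => alpha i + (a i \in sp))%N; split.
- move=> i; rewrite leq_addr leq_add2l /=.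
  case sp_i: (a i \in sp) => //=.
  by have := sp_sub _ sp_i; rewrite mem_image // inE.
- under eq_bigr => i _ do rewrite addKn.
  rewrite -(size_mset_of a) (perm_size (perm_mset_of_mem a_inj sp_uniq sp_codom)).
  by apply: leq_trans size_sp _; rewrite -mulnn leq_mul // leq_pred.
apply: t_weakly_sequenceable_perm sp_seq; rewrite perm_sym.
apply: perm_trans (perm_mset_ofD _ _ _) _.
have -> : blocks u = mset_of a alpha by rewrite /blocks -map_comp.
by rewrite perm_cat2l perm_mset_of_mem.
Qed.
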